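(* Fix $g\ge0$ and $n\ge0$. There is a bijection between Dyck paths of semilength $n$ and height at most $g+1$ and quadruples $(m,L,R,M)$ such that - $m$ is a non-negative integer, - $L=(L_1,\dots,L_m)$ is an $m$-tuple of Dyck paths of height at most $\lfloor g/2\rfloor$, - $R=(R_1,\dots,R_m)$ is an $m$-tuple of Dyck paths of height at most $\lceil g/2\rceil$, - $M$ is a Dyck path of height at most $\lceil g/2\rceil$ if $m=0$, and of height exactly $\lceil g/2\rceil$ otherwise, and the sum of the semilengths of the Dyck paths in $L$, $R$ and $M$ is $n-m$.
   Context: A Dyck path of semilength $k\ge0$ is a lattice path from $(0,0)$ to $(2k,0)$ with steps $(1,1)$ and $(1,-1)$ never going below the $x$-axis (the empty path is the Dyck path of semilength $0$). Its height is the maximal $y$-coordinate it attains. *)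

From mathcomp Require Import all_boot.
Set Implicit Arguments. Unset Strict Implicit. Unset Printing Implicit Defensive.

(* A lattice path with steps (1,1) (= true) and (1,-1) (= false) is encoded
   as a sequence of booleans. *)

Fixpoint dyck_from (h : nat) (p : seq bool) : bool :=
  match p with
  | [::] => h == 0
  | true :: p' => dyck_from h.+1 p'
  | false :: p' => (0 < h) && dyck_from h.-1 p'
  end.

Definition dyck (p : seq bool) : bool := dyck_from 0 p.

Fixpoint height_from (h : nat) (p : seq bool) : nat :=
  match p with
  | [::] => h
  | b :: p' => maxn h (height_from (if b then h.+1 else h.-1) p')
  end.

Definition height (p : seq bool) : nat := height_from 0 p.

Definition semilength (p : seq bool) : nat := (size p)./2.

Definition dyck_bounded (g n : nat) (p : seq bool) : Prop :=
  dyck p /\ semilength p = n /\ height p <= g.+1.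

Definition quad := (nat * seq (seq bool) * seq (seq bool) * seq bool)%type.

Definition good_quad (g n : nat) (q : quad) : Prop :=
  let: (m, L, R, M) := q in
  [/\ size L = m /\ size R = m,
      all (fun P => dyck P && (height P <= g./2)) L,
      all (fun P => dyck P && (height P <= (g.+1)./2)) R,
      dyck M && (if m == 0 then height M <= (g.+1)./2
                 else height M == (g.+1)./2)
    & \sum_(P <- L) semilength P + \sum_(P <- R) semilength P
        + semilength M + m = n].

(* Put b = ceil(g/2) and a = floor(g/2), so that a + b + 1 = g + 1.  Cut a
   Dyck path of height at most a + b + 1 at its first visit to level b.  From
   there on the path splits uniquely into blocks followed by a tail that never
   rises above b: a block is a stretch from b back to b inside [0, b] (reflected,
   a Dyck path R_i of height <= b), an up step to b + 1, a stretch from b + 1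
   back to b + 1 staying at or above b + 1 (shifted down, a Dyck path L_i of
   height <= a) and a down step to b; it starts at the first up step leaving
   [0, b] and its upper part ends at the first down step leaving [b + 1, oo).
   The initial segment followed by the tail is M; its height is at most b, and
   exactly b as soon as there is a block.  Each block contributes one extra
   up/down pair, which accounts for the m in the semilength count. *)

From mathcomp Require Import all_boot zify.
From Stdlib Require Import ProofIrrelevance.
Set Implicit Arguments. Unset Strict Implicit. Unset Printing Implicit Defensive.

Definition step (h : nat) (up : bool) : nat := if up then h.+1 else h.-1.

Definition level (h : nat) (p : seq bool) : nat := foldl step h p.
Arguments level : simpl never.

Lemma level_cons h x p : level h (x :: p) = level (step h x) p.
Proof. by []. Qed.

Lemma level_cat h u v : level h (u ++ v) = level (level h u) v.
Proof. exact: foldl_cat. Qed.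

(* The clause [x || 0 < h] forbids a down step from 0, which [step] would
   silently turn into a flat step. *)
Fixpoint in_strip (lo hi h : nat) (p : seq bool) : bool :=
  (lo <= h <= hi) &&
  if p is x :: p' then (x || (0 < h)) && in_strip lo hi (step h x) p' else true.

Lemma in_strip_bounds lo hi h p : in_strip lo hi h p -> lo <= h <= hi.
Proof. by case: p => [|x p] /andP []. Qed.

Lemma in_strip_cat lo hi h u v :
  in_strip lo hi h (u ++ v) = in_strip lo hi h u && in_strip lo hi (level h u) v.
Proof.
elim: u h => [|x u IH] h /=; last by rewrite IH !andbA.
by apply/idP/idP => [Hv | /andP [] //]; rewrite Hv (in_strip_bounds Hv).
Qed.

Lemma in_strip_level lo hi h p : in_strip lo hi h p -> lo <= level h p <= hi.
Proof.
elim: p h => [|x p IH] h /=; first by rewrite andbT.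
by case/andP => _ /andP [] _ /IH.
Qed.

Lemma in_strip_widen lo hi lo' hi' h p :
  lo' <= lo -> hi <= hi' -> in_strip lo hi h p -> in_strip lo' hi' h p.
Proof.
move=> le_lo le_hi; elim: p h => [|x p IH] h /=.
  by rewrite !andbT => /andP [] *; apply/andP; split; lia.
case/andP => /andP [] lo_h h_hi /andP [] -> /IH ->.
by rewrite andbT; apply/andP; split; lia.
Qed.

Lemma in_strip_shift lo hi s h p :
  in_strip (lo + s) (hi + s) (h + s) p = in_strip lo hi h p.
Proof.
elim: p h => [|x p IH] h /=; first by rewrite !leq_add2r.
rewrite !leq_add2r; case: x => /=; first by rewrite -addSn IH.
case: h => [|h] /=; last by rewrite IH.
rewrite add0n andbF andbC; case: s {IH} => //= s.
by case S: (in_strip _ _ _ _) => //; move: (in_strip_bounds S); lia.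
Qed.

Lemma level_shift lo hi s h p :
  in_strip lo hi h p -> level (h + s) p = level h p + s.
Proof.
elim: p h => [|x p IH] h // /andP [] _ /andP [] hx S.
by rewrite !level_cons -IH //; congr level; case: x hx {S} => //= hx; lia.
Qed.

Lemma in_strip_flip hi h p :
  h <= hi -> in_strip 0 hi (hi - h) (map negb p) = in_strip 0 hi h p.
Proof.
elim: p h => [|x p IH] h /= hh; first by rewrite leq_subr hh.
rewrite leq_subr hh /=; case: x => /=.
  case: (ltnP h hi) => hl.
    have -> : (hi - h).-1 = hi - h.+1 by lia.
    by rewrite IH // subn_gt0 hl.
  have -> : h = hi by lia.
  by rewrite subnn /=; case S: (in_strip _ _ _ _) => //; move: (in_strip_bounds S); lia.
case: h hh => [|h] hh /=.
  by rewrite subn0; case S: (in_strip _ _ _ _) => //; move: (in_strip_bounds S); lia.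
have -> : (hi - h.+1).+1 = hi - h by lia.
by rewrite IH //; lia.
Qed.

Lemma level_flip hi h p :
  in_strip 0 hi h p -> level (hi - h) (map negb p) = hi - level h p.
Proof.
elim: p h => [|x p IH] h // /andP [] /andP [] _ hh /andP [] hx S.
rewrite map_cons !level_cons -IH //; congr level.
by move: (in_strip_bounds S); case: x hx {S} => //= hx; lia.
Qed.

Definition bounded_dyck (c : nat) (p : seq bool) : bool := dyck p && (height p <= c).

Lemma height_from_ge h p : h <= height_from h p.
Proof. by case: p => [|x p] //=; rewrite leq_maxl. Qed.

Lemma level_le_height h u v : level h u <= height_from h (u ++ v).
Proof.
elim: u h => [|x u IH] h /=; first exact: height_from_ge.
by rewrite level_cons; apply: leq_trans (IH _) (leq_maxr _ _).
Qed.

Lemma dyck_from_heightE c h p :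
  dyck_from h p && (height_from h p <= c) = in_strip 0 c h p && (level h p == 0).
Proof.
elim: p h => [|x p IH] h /=; first by rewrite andbT andbC.
rewrite level_cons; case: x => /=.
  have -> : maxn h (height_from h.+1 p) = height_from h.+1 p.
    by apply/maxn_idPr; apply: leq_trans (height_from_ge _ _).
  rewrite IH; case S: (in_strip _ _ _ _); rewrite ?andbF //=.
  by case/andP: (in_strip_bounds S) => _ /ltnW ->.
by rewrite geq_max; case: (0 < h) => //=; case: (h <= c); rewrite ?IH ?andbF.
Qed.

Lemma bounded_dyckE c p : bounded_dyck c p = in_strip 0 c 0 p && (level 0 p == 0).
Proof. exact: dyck_from_heightE. Qed.

Lemma bounded_dyck_flip b p :
  bounded_dyck b p = in_strip 0 b b (map negb p) && (level b (map negb p) == b).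
Proof.
have := in_strip_flip p (leq0n b); rewrite subn0 bounded_dyckE => ->.
case S: (in_strip 0 b 0 p) => //=.
have := level_flip S; rewrite subn0 => ->.
by move: (in_strip_level S) => /andP [] _ le_b; apply/eqP/eqP; lia.
Qed.

Lemma bounded_dyck_shift a s p :
  bounded_dyck a p = in_strip s (a + s) s p && (level s p == s).
Proof.
have := in_strip_shift 0 a s 0 p; rewrite !add0n bounded_dyckE => ->.
case S: (in_strip 0 a 0 p) => //=.
by have := level_shift s S; rewrite add0n => ->; rewrite -{2}[s]add0n eqn_add2r.
Qed.

Lemma size_dyck p : dyck p -> size p = (semilength p).*2.
Proof.
suff even_size h q : dyck_from h q -> ~~ odd (size q + h).
  by move/even_size; rewrite addn0 => /negbTE odd_p; rewrite -[LHS]odd_double_half odd_p.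
elim: q h => [|x q IH] h /=; first by move/eqP ->.
case: x => /=; first by move/IH; rewrite addnS.
by case/andP; case: h => //= h _ /IH; rewrite addnS /= negbK.
Qed.

Section FirstCut.

(* A stopping test sees only the current level and the next step, so whether a
   prefix avoids it does not depend on what follows the prefix. *)
Variable stop : nat -> option bool -> bool.

Fixpoint cut (h : nat) (p : seq bool) : seq bool * seq bool :=
  if stop h (ohead p) then ([::], p) else
  if p is x :: p' then let: (u, v) := cut (step h x) p' in (x :: u, v)
  else ([::], [::]).

Fixpoint avoids (h : nat) (u : seq bool) : bool :=
  if u is x :: u' then ~~ stop h (Some x) && avoids (step h x) u' else true.

Variant cut_spec (h : nat) (p : seq bool) : seq bool * seq bool -> Type :=
  CutSpec u v of u ++ v = p & avoids h u & stop (level h u) (ohead v) || (v == [::]) :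
    cut_spec h p (u, v).

Lemma cutP h p : cut_spec h p (cut h p).
Proof.
elim: p h => [|x p IH] h /=.
  by case: ifP => stop_h; constructor; rewrite //= stop_h.
case: ifP => stop_h; first by constructor; rewrite //= stop_h.
by case: (IH (step h x)) => u v <- av_u stop_u; constructor; rewrite //= stop_h.
Qed.

Lemma cut_uniq h u v :
  avoids h u -> stop (level h u) (ohead v) || (v == [::]) -> cut h (u ++ v) = (u, v).
Proof.
elim: u h => [|x u IH] h /=; last by case/andP => /negbTE -> /IH H /H ->.
by case: v => [|y v] _ /=; [case: (stop h None) | rewrite orbF /level /= => ->].
Qed.

End FirstCut.

Lemma sub_avoids (stop stop' : nat -> option bool -> bool) h u :
  (forall h x, stop' h x -> stop h x) -> avoids stop h u -> avoids stop' h u.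
Proof.
move=> sub; elim: u h => [|x u IH] h //= /andP [] not_stop /IH ->.
by case: (boolP (stop' h _)) not_stop => // /sub ->.
Qed.

Definition at_level (b h : nat) (_ : option bool) : bool := h == b.
Definition up_from (b h : nat) (x : option bool) : bool := (h == b) && odflt false x.
Definition down_from (b h : nat) (x : option bool) : bool := (h == b) && ~~ odflt true x.

Lemma avoids_at_level_height b h u :
  h <= b -> avoids (at_level b) h u -> level h u != b -> height_from h u < b.
Proof.
elim: u h => [|x u IH] h /=; first by move=> h_b _; rewrite ltn_neqAle h_b andbT.
rewrite level_cons /at_level => h_b /andP [] h_neq av_u lvl_neq.
rewrite gtn_max IH ?andbT //; first by rewrite ltn_neqAle h_neq.
by case: x {av_u lvl_neq} => /=; lia.
Qed.

Lemma avoids_up_from_strip lo hi c h u :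
  h <= hi -> avoids (up_from hi) h u -> in_strip lo c h u -> in_strip lo hi h u.
Proof.
elim: u h => [|x u IH] h /=; first by move=> h_hi _ /andP [] /andP [] -> _; rewrite h_hi.
rewrite /up_from => h_hi /andP [] not_up av_u /andP [] /andP [] -> _ /andP [] -> S /=.
by rewrite h_hi (IH _ _ av_u S) //; case: x not_up {av_u S} => /=; lia.
Qed.

Lemma in_strip_avoids_up_from lo hi h u : in_strip lo hi h u -> avoids (up_from hi) h u.
Proof.
elim: u h => [|x u IH] h //= /andP [] /andP [] _ h_hi /andP [] _ S.
rewrite (IH _ S) andbT /up_from; case: x S => /= S; rewrite ?andbF //.
by case/andP: (in_strip_bounds S) => _; rewrite andbT; lia.
Qed.

Lemma avoids_down_from_strip lo c h u :
  lo <= h -> avoids (down_from lo) h u -> in_strip 0 c h u -> in_strip lo c h u.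
Proof.
elim: u h => [|x u IH] h /=; first by move=> -> _ /=.
rewrite /down_from => lo_h /andP [] not_down av_u /andP [] h_c /andP [] pos S.
by rewrite lo_h h_c pos (IH _ _ av_u S) //; case: x not_down pos {av_u S} => /=; lia.
Qed.

Lemma in_strip_avoids_down_from lo hi h u : in_strip lo hi h u -> avoids (down_from lo) h u.
Proof.
elim: u h => [|x u IH] h //= /andP [] _ /andP [] pos S.
rewrite (IH _ S) andbT /down_from; case: x pos S => /= pos S; rewrite ?andbF //.
by case/andP: (in_strip_bounds S) => + _; rewrite andbT; lia.
Qed.

(* The R-part is stored reflected: [map negb] turns a Dyck path of height at
   most b into a path from b back to b inside [0, b]. *)
Definition block (s : seq bool * seq bool) : seq bool :=
  map negb s.1 ++ true :: s.2 ++ [:: false].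

Definition block_ok (a b : nat) (s : seq bool * seq bool) : bool :=
  bounded_dyck b s.1 && bounded_dyck a s.2.

Lemma block_okE a b R L : block_ok a b (R, L) =
  [&& in_strip 0 b b (map negb R), level b (map negb R) == b,
      in_strip b.+1 (a + b.+1) b.+1 L & level b.+1 L == b.+1].
Proof. by rewrite /block_ok bounded_dyck_flip (bounded_dyck_shift _ b.+1) !andbA. Qed.

Lemma block_strip a b s :
  block_ok a b s -> in_strip 0 (a + b.+1) b (block s) && (level b (block s) == b).
Proof.
case: s => R L; rewrite block_okE => /and4P [S_R /eqP lvl_R S_L /eqP lvl_L].
rewrite /block /= in_strip_cat level_cat lvl_R /= in_strip_cat level_cons level_cat /= lvl_L.
have b_le : b <= a + b.+1 by lia.
by rewrite (in_strip_widen _ b_le S_R) ?(in_strip_widen _ _ S_L) //= /level /= eqxx b_le leq_addl.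
Qed.

Lemma flatten_blocks_strip a b Z : all (block_ok a b) Z ->
  in_strip 0 (a + b.+1) b (flatten (map block Z)) && (level b (flatten (map block Z)) == b).
Proof.
elim: Z => [|s Z IH] /=; first by rewrite eqxx andbT; lia.
case/andP => /block_strip /andP [S_s /eqP lvl_s] /IH /andP [S_Z lvl_Z].
by rewrite in_strip_cat level_cat lvl_s S_s S_Z lvl_Z.
Qed.

Lemma size_block R L :
  dyck R -> dyck L -> size (block (R, L)) = (semilength R + semilength L).+1.*2.
Proof.
move=> /size_dyck size_R /size_dyck size_L.
by rewrite /block /= size_cat /= size_cat size_map size_R size_L addn1 doubleS doubleD; lia.
Qed.

(* [fuel] bounds the number of blocks; [size r] always suffices. *)
Fixpoint cut_blocks (b fuel : nat) (r : seq bool) : seq (seq bool * seq bool) * seq bool :=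
  if fuel is fuel'.+1 then
    let: (s, v) := cut (up_from b) b r in
    if v is true :: v' then
      let: (L, w) := cut (down_from b.+1) b.+1 v' in
      let: (Z, rest) := cut_blocks b fuel' (behead w) in ((map negb s, L) :: Z, rest)
    else ([::], r)
  else ([::], r).

Lemma cut_blocks_flatten a b fuel Z v :
  size Z <= fuel -> all (block_ok a b) Z -> in_strip 0 b b v ->
  cut_blocks b fuel (flatten (map block Z) ++ v) = (Z, v).
Proof.
move=> + + S_v; elim: Z fuel => [|[R L] Z IH] [|fuel] //= size_Z.
  by rewrite -{1}[v]cats0 cut_uniq ?orbT //; exact: in_strip_avoids_up_from S_v.
rewrite block_okE => /andP [/and4P [S_R /eqP lvl_R S_L /eqP lvl_L] ok_Z].
rewrite /block /= -!catA /= -catA /=.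
rewrite cut_uniq; last by rewrite /up_from lvl_R eqxx.
  rewrite cut_uniq /=; last by rewrite /down_from lvl_L eqxx.
    by rewrite IH // (mapK negbK).
  exact: in_strip_avoids_down_from S_L.
exact: in_strip_avoids_up_from S_R.
Qed.

Lemma cut_blocksP a b fuel r :
  size r <= fuel -> in_strip 0 (a + b.+1) b r -> level b r = 0 ->
  let: (Z, w) := cut_blocks b fuel r in
  [/\ flatten (map block Z) ++ w = r, all (block_ok a b) Z, in_strip 0 b b w & level b w = 0].
Proof.
elim: fuel r => [|fuel IH] r /=.
  by rewrite leqn0 => /nilP -> _ lvl_r; rewrite /= leqnn.
move=> size_r S_r lvl_r; case: cutP => s v cat_sv av_s stop_s.
case: v cat_sv stop_s => [|[] v] cat_sv stop_s; rewrite /up_from /= ?andbF // in stop_s.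
  rewrite cats0 in cat_sv; rewrite -cat_sv in S_r lvl_r *.
  by rewrite (avoids_up_from_strip _ av_s S_r).
move: stop_s; rewrite orbF andbT => /eqP lvl_s.
subst r; rewrite level_cat lvl_s level_cons in lvl_r.
rewrite in_strip_cat lvl_s /= in S_r; case/andP: S_r => [S_s /andP [_ S_v]].
case: cutP => L w cat_Lw av_L stop_L; subst v.
rewrite level_cat in lvl_r; rewrite in_strip_cat in S_v; case/andP: S_v => [S_L0 S_w].
have S_L := avoids_down_from_strip (ltnSn b) av_L S_L0.
case: w stop_L lvl_r S_w size_r => [|[] w] stop_L lvl_r S_w size_r;
  rewrite /down_from /= ?andbF // in stop_L.
  by have := in_strip_level S_L; rewrite /level /= in lvl_r *; rewrite lvl_r.
move: stop_L; rewrite orbF andbT => /eqP lvl_L.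
rewrite /= lvl_L level_cons in lvl_r; rewrite lvl_L /= in S_w; case/andP: S_w => _ S_w.
have size_w : size w <= fuel by move: size_r; rewrite size_cat /= size_cat /=; lia.
case: (cut_blocks b fuel w) (IH w size_w S_w lvl_r) => Z rest [cat_Z ok_Z S_rest lvl_rest].
split=> //; first by rewrite /block /= (mapK negbK) -cat_Z -!catA /= -catA.
rewrite /= ok_Z andbT block_okE (mapK negbK) lvl_s lvl_L S_L !eqxx !andbT.
exact: avoids_up_from_strip av_s S_s.
Qed.

Lemma all_block_ok a b Z :
  all (block_ok a b) Z = all (bounded_dyck b) (unzip1 Z) && all (bounded_dyck a) (unzip2 Z).
Proof.
elim: Z => [|[R L] Z IH] //; rewrite [LHS]/= IH /block_ok /=.
by case: (bounded_dyck b R); case: (bounded_dyck a L); rewrite ?andbF.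
Qed.

Lemma size_flatten_blocks R L : size R = size L -> all dyck R -> all dyck L ->
  size (flatten (map block (zip R L))) =
  (\sum_(P <- L) semilength P + \sum_(P <- R) semilength P + size L).*2.
Proof.
elim: R L => [|R0 R IH] [|L0 L] //=; first by rewrite !big_nil.
move=> [size_RL] /andP [dyck_R0 dyck_R] /andP [dyck_L0 dyck_L].
rewrite size_cat size_block // IH // !big_cons.
set sL := \sum_(_ <- L) _; set sR := \sum_(_ <- R) _.
by rewrite !doubleD !doubleS -!addnn; lia.
Qed.

Lemma size_le_flatten_blocks Z : size Z <= size (flatten (map block Z)).
Proof. by elim: Z => //= s Z IH; rewrite size_cat -add1n leq_add // size_cat addnS. Qed.

Definition quad_shape (a b : nat) (q : quad) : bool :=
  let: (m, L, R, M) := q in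
  [&& size L == m, size R == m, all (bounded_dyck a) L, all (bounded_dyck b) R &
      dyck M && (if m == 0 then height M <= b else height M == b)].

Definition quad_weight (q : quad) : nat :=
  let: (m, L, R, M) := q in
  \sum_(P <- L) semilength P + \sum_(P <- R) semilength P + semilength M + m.

Lemma good_quadE g n q :
  good_quad g n q <-> quad_shape g./2 (g.+1)./2 q /\ quad_weight q = n.
Proof.
case: q => [[[m L] R] M]; split.
  by case=> [[/eqP size_L /eqP size_R]] ok_L ok_R ok_M weight; split=> //; apply/and5P.
by case=> /and5P [/eqP size_L /eqP size_R ok_L ok_R ok_M] weight; split.
Qed.

Definition glue (b : nat) (q : quad) : seq bool :=
  let: (_, L, R, M) := q in
  let: (u, v) := cut (at_level b) 0 M in u ++ flatten (map block (zip R L)) ++ v.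

Definition unglue (b : nat) (p : seq bool) : quad :=
  let: (u, v) := cut (at_level b) 0 p in
  let: (Z, w) := cut_blocks b (size p) v in
  (size Z, unzip2 Z, unzip1 Z, u ++ w).

Lemma semilength_glue a b q : quad_shape a b q -> semilength (glue b q) = quad_weight q.
Proof.
case: q => [[[m L] R] M] /and5P [/eqP size_L /eqP size_R ok_L ok_R /andP [dyck_M _]].
have dyck_all c (Ps : seq (seq bool)) : all (bounded_dyck c) Ps -> all dyck Ps.
  by apply: sub_all => P /andP [].
rewrite /glue {1}/semilength; case: cutP => u v cat_uv _ _ /=.
have -> : size (u ++ flatten (map block (zip R L)) ++ v) =
          size (flatten (map block (zip R L))) + size M.
  by rewrite -cat_uv !size_cat; lia.
rewrite size_flatten_blocks ?size_L ?size_R ?(dyck_all _ _ ok_L) ?(dyck_all _ _ ok_R) //.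
by rewrite (size_dyck dyck_M) -doubleD doubleK addnAC.
Qed.

Lemma glue_blocks b u Z w :
  avoids (at_level b) 0 u -> (level 0 u == b) || (w == [::]) ->
  glue b (size Z, unzip2 Z, unzip1 Z, u ++ w) = u ++ flatten (map block Z) ++ w.
Proof. by move=> av_u stop_u; rewrite /glue cut_uniq // zip_unzip. Qed.

Lemma quad_shape_blocks a b Z M :
  all (block_ok a b) Z -> bounded_dyck b M -> (Z != [::] -> b <= height M) ->
  quad_shape a b (size Z, unzip2 Z, unzip1 Z, M).
Proof.
rewrite all_block_ok => /andP [ok_R ok_L] /andP [dyck_M h_M] reach_b.
rewrite /quad_shape !size_map eqxx ok_L ok_R dyck_M /= size_eq0.
by case: eqP reach_b => // _ /(_ isT) b_le; rewrite eqn_leq h_M b_le.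
Qed.

Lemma up_from_at_level b h x : up_from b h x -> at_level b h x.
Proof. by case/andP. Qed.

Lemma unglueK a b p :
  bounded_dyck (a + b.+1) p -> quad_shape a b (unglue b p) /\ glue b (unglue b p) = p.
Proof.
rewrite bounded_dyckE => /andP [S_p /eqP lvl_p]; rewrite /unglue.
case: cutP => u v cat_uv av_u stop_u /=.
move: S_p lvl_p; rewrite -cat_uv in_strip_cat level_cat => /andP [S_u0 S_v] lvl_v.
have S_u := avoids_up_from_strip (leq0n b) (sub_avoids (@up_from_at_level b) av_u) S_u0.
have [v_nil | v_cons] := eqVneq v [::].
  subst v; have -> : cut_blocks b (size (u ++ [::])) [::] = ([::], [::]).
    by case: (size _) => //= ?; case: ifP.
  rewrite cats0; split; last by have := @glue_blocks b u [::] [::] av_u (orbT _); rewrite !cats0.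
  by apply: quad_shape_blocks; rewrite // bounded_dyckE S_u; apply/eqP.
move: stop_u; rewrite (negbTE v_cons) orbF /at_level => /eqP lvl_u.
rewrite lvl_u in S_v lvl_v.
have size_v : size v <= size (u ++ v) by rewrite size_cat leq_addl.
case: (cut_blocks b _ v) (cut_blocksP size_v S_v lvl_v) => Z w [cat_Zw ok_Z S_w lvl_w].
split; last by rewrite glue_blocks ?lvl_u ?eqxx // cat_Zw.
apply: quad_shape_blocks => //; last by rewrite -lvl_u level_le_height.
by rewrite bounded_dyckE in_strip_cat level_cat lvl_u S_u S_w lvl_w.
Qed.

Lemma glueK a b q :
  quad_shape a b q -> bounded_dyck (a + b.+1) (glue b q) /\ unglue b (glue b q) = q.
Proof.
case: q => [[[m L] R] M] /and5P [/eqP size_L /eqP size_R ok_L ok_R /andP [dyck_M h_M]].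
have M_b : bounded_dyck b M.
  by rewrite /bounded_dyck dyck_M /=; case: (m == 0) h_M => // /eqP ->.
have size_RL : size R <= size L by rewrite size_L size_R.
have size_LR : size L <= size R by rewrite size_L size_R.
set Z := zip R L.
have size_Z : size Z = m by rewrite size_zip size_L size_R minnn.
have ok_Z : all (block_ok a b) Z by rewrite all_block_ok unzip1_zip ?unzip2_zip ?ok_R.
rewrite /glue -/Z; case: cutP => u v cat_uv av_u stop_u /=.
move: M_b; rewrite bounded_dyckE -cat_uv in_strip_cat level_cat => /andP [/andP [S_u S_v] lvl_v].
have reach_b : (level 0 u == b) || (Z == [::]) && (v == [::]).
  have [// | lvl_u /=] := eqVneq (level 0 u) b.
  move: stop_u; rewrite /at_level (negbTE lvl_u) /= => /eqP v_nil.
  rewrite v_nil andbT -size_eq0 size_Z; apply: contraT => m_pos.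
  have := avoids_at_level_height (leq0n b) av_u lvl_u.
  by move: h_M; rewrite (negbTE m_pos) -cat_uv v_nil cats0 /height => /eqP ->; rewrite ltnn.
have S_v_b : in_strip 0 b b v.
  case/orP: reach_b => [/eqP lvl_u | /andP [_ /eqP v_nil]]; first by rewrite lvl_u in S_v.
  by rewrite v_nil /= leqnn.
have b_le : b <= a + b.+1 := leq_trans (leqnSn b) (leq_addl a b.+1).
split.
  rewrite bounded_dyckE !in_strip_cat !level_cat (in_strip_widen _ b_le S_u) //.
  case/orP: reach_b => [/eqP lvl_u | /andP [/eqP -> /eqP v_nil]].
    have /andP [S_Z /eqP lvl_Z] := flatten_blocks_strip ok_Z.
    by rewrite lvl_u in lvl_v; rewrite lvl_u S_Z lvl_Z lvl_v (in_strip_widen _ b_le S_v_b).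
  by move: lvl_v; rewrite v_nil /level /= => /eqP ->.
rewrite /unglue cut_uniq //; last first.
  by rewrite /at_level; case/orP: reach_b => [-> // | /andP [/eqP -> /eqP ->]]; rewrite orbT.
rewrite (cut_blocks_flatten _ ok_Z S_v_b) //; last first.
  by rewrite !size_cat addnCA (leq_trans (size_le_flatten_blocks Z)) ?leq_addr.
by rewrite size_Z unzip1_zip ?unzip2_zip // cat_uv.
Qed.

Lemma sig_bijective (A B : Type) (P : A -> Prop) (Q : B -> Prop) (f : A -> B) (g : B -> A) :
  (forall x, P x -> Q (f x) /\ g (f x) = x) -> (forall y, Q y -> P (g y) /\ f (g y) = y) ->
  exists h : {x | P x} -> {y | Q y}, bijective h.
Proof.
move=> fK gK; have sig_eq T (R : T -> Prop) := eq_sig_hprop (fun x => @proof_irrelevance (R x)).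
exists (fun x => exist Q (f (sval x)) (fK _ (svalP x)).1).
exists (fun y => exist P (g (sval y)) (gK _ (svalP y)).1).
  by case=> x Px; apply: sig_eq; exact: (fK x Px).2.
by case=> y Qy; apply: sig_eq; exact: (gK y Qy).2.
Qed.

Theorem lemma3p11 (g n : nat) :
  exists f : {p : seq bool | dyck_bounded g n p} -> {q : quad | good_quad g n q},
    bijective f.
Proof.
have g_split : g./2 + (g.+1)./2.+1 = g.+1.
  by have := odd_double_half g; rewrite -uphalfE uphalf_half -addnn; lia.
set b := (g.+1)./2 in g_split *.
apply: (sig_bijective (f := unglue b) (g := glue b)).
  move=> p [dyck_p [len_p h_p]].
  have /unglueK [shape_q glue_q] : bounded_dyck (g./2 + b.+1) p.
    by rewrite g_split /bounded_dyck dyck_p h_p.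
  by split=> //; apply/good_quadE; rewrite -(semilength_glue shape_q) glue_q.
move=> q /good_quadE [shape_q <-].
have [/andP [dyck_p h_p] unglue_p] := glueK shape_q.
by split=> //; split=> //; split; [exact: semilength_glue shape_q | rewrite -g_split].
Qed.
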